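(* For all positive integers $m,n$, the generalized Mazur pattern $Q_{m,n}$ is isotopic to $Q_{n,m}$ inside the solid torus $S^1\times D^2$ (as unoriented knots; with orientations, $Q_{m,n}$ is isotopic to the reverse of $Q_{n,m}$).
   Context: Generalized Mazur pattern: for positive integers $m,n$, $Q_{m,n}\subset V=S^1\times D^2$ is the knot obtained as follows: starting from a point in the solid torus, wind $m$ times around the $S^1$ direction, then turn around and wind $n$ times back; join the top endpoint of the resulting arc to the bottom endpoint by an arc that crosses under the first $n$ strands and over the next $m$ strands, producing a clasp where the pattern turns around. *)

From mathcomp Require Import all_boot all_order all_algebra.
From mathcomp Require Import all_classical all_reals all_analysis.
Unset Strict Implicit. Unset Printing Implicit Defensive.
Import Order.TTheory GRing.Theory Num.Theory.
Import numFieldNormedType.Exports.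
Local Open Scope classical_set_scope.
Local Open Scope ring_scope.

(* Model of the solid torus V = S^1 x D^2: the (closed) annulus
   1 <= x^2 + y^2 <= 9 in the plane times the interval -1 <= z <= 1,
   as a subset of R^3 = (R * R) * R. *)
Definition solid_torus (R : realType) : set (R * R * R) :=
  [set p | (1 <= p.1.1 ^+ 2 + p.1.2 ^+ 2 <= 9) /\ (-1 <= p.2 <= 1)].

(* Cylindrical coordinates: radius r, angle 2*pi*th (th measured in turns),
   height z. *)
Definition cyl (R : realType) (r th z : R) : R * R * R :=
  (r * cos (2 * pi * th), r * sin (2 * pi * th), z).

Definition lerp2 (R : realType) (a b : R * R) (l : R) : R * R :=
  ((1 - l) * a.1 + l * b.1, (1 - l) * a.2 + l * b.2).

(* The generalized Mazur pattern Q_{m,n}, as a closed PL-in-cylindrical-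
   coordinates curve parametrised by t in [0, L + 5], L = m + n + 1.
   - t in [0, L]: a spiral at height 0 whose radius 3/2 + t/L increases
     strictly (so this part is embedded); its angle (in turns) first
     increases from 0 to m + 1/2 (winding m times, plus half a turn to
     reach the turning point off the closing ray), then decreases from
     m + 1/2 to m - n (winding n times back).
   - t in [L, L + 5]: the closing arc, a polygon in the half-plane of
     angle 0 (coordinates (r, z)), from the outer endpoint (5/2, 0) to the
     inner endpoint (3/2, 0): it first dips to height -1/2, passing UNDER
     the n strands of the backward part, then rises to height +1/2 at a
     radius c strictly between the backward and forward strands, passing
     OVER the m strands of the forward part. *)
Definition mazur_path (R : realType) (m n : nat) (t : R) : R * R * R :=
  let L : R := (m + n).+1%:R in
  let c : R := 3 / 2 + (m%:R + 1 / 2) / L in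
  if t <= L then
    let th := if t <= m%:R + 1 / 2 then t else 2 * m%:R + 1 - t in
    cyl R (3 / 2 + t / L) th 0
  else
    let s := t - L in
    let P0 : R * R := (5 / 2, 0) in
    let P1 : R * R := (5 / 2 - 1 / (2 * L), - (1 / 2)) in
    let P2 : R * R := (c, - (1 / 2)) in
    let P3 : R * R := (c, 1 / 2) in
    let P4 : R * R := (3 / 2 + 1 / (2 * L), 1 / 2) in
    let P5 : R * R := (3 / 2, 0) in
    let q := if s <= 1 then lerp2 R P0 P1 s
             else if s <= 2 then lerp2 R P1 P2 (s - 1)
             else if s <= 3 then lerp2 R P2 P3 (s - 2)
             else if s <= 4 then lerp2 R P3 P4 (s - 3)
             else lerp2 R P4 P5 (s - 4) in
    (q.1, 0, q.2).

(* 1-periodic parametrisation R -> R^3 of Q_{m,n} (a map from the circle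
   R/Z), with its natural orientation (forward m-part first). *)
Definition mazur_param (R : realType) (m n : nat) (s : R) : R * R * R :=
  mazur_path R m n ((s - (Num.floor s)%:~R) * (m + n + 6)%:R).

Definition mazur_knot (R : realType) (m n : nat) : set (R * R * R) :=
  range (mazur_param R m n).

Definition ambient_isotopy (R : realType) {T : topologicalType}
    (V : set T) (H : R -> T -> T) : Prop :=
  [/\ {within [set q : R * T | 0 <= q.1 <= 1 /\ V q.2],
         continuous (fun q : R * T => H q.1 q.2)},
      (forall p, V p -> H 0 p = p) &
      (forall t, 0 <= t <= 1 ->
         (forall p, V p -> V (H t p)) /\
         exists G : T -> T,
           [/\ (forall p, V p -> V (G p)),
               (forall p, V p -> G (H t p) = p),
               (forall p, V p -> H t (G p) = p) &
               {within V, continuous G}])].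

Definition orientation_reversing_lift (R : realType) (phi : R -> R) : Prop :=
  [/\ continuous phi,
      (forall x y, x < y -> phi y < phi x) &
      (forall s, phi (s + 1) = phi s - 1)].

(* The isotopy twists the solid torus about its core circle r = 2, z = 0.
   In the meridian half-plane through a point, with coordinates w = (r - 2, z)
   centred on the core, [twist t] rotates w by the angle pi t b(|w|), where the
   bump b is 1 for |w| <= 3/4 and 0 for |w| >= 1.  Rotations preserve |w|, so
   [twist t] maps V onto itself with inverse [twist (- t)].  The pattern Q_{m,n}
   lies in the tube |w| <= 3/4, on which [twist 1] is the half-turn
   (r, z) |-> (4 - r, - z) of every meridian disc.  It reverses the radial order
   of the spiral, exchanging its m forward and n backward windings, and turns
   the clasp arc upside down, exchanging its under- and over-passes: the image
   is Q_{n,m} traversed backwards. *)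

From mathcomp Require Import all_boot all_order all_algebra.
From mathcomp Require Import all_classical all_reals all_analysis.
From mathcomp Require Import ring lra.
Import Order.TTheory GRing.Theory Num.Theory.
Import numFieldNormedType.Exports.
Local Open Scope classical_set_scope.
Local Open Scope ring_scope.

Section ContinuousFun.
Context {R : realType} {T : topologicalType}.
Implicit Types f g : T -> R.

Lemma fun_continuousD f g :
  continuous f -> continuous g -> continuous (fun x => f x + g x).
Proof. by move=> cf cg x; apply: cvgD; [apply: cf | apply: cg]. Qed.

Lemma fun_continuousM f g :
  continuous f -> continuous g -> continuous (fun x => f x * g x).
Proof. by move=> cf cg x; apply: cvgM; [apply: cf | apply: cg]. Qed.

Lemma fun_continuousN f : continuous f -> continuous (fun x => - f x).
Proof. by move=> cf x; apply: cvgN; apply: cf. Qed.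

Lemma fun_continuousV f :
  (forall x, f x != 0) -> continuous f -> continuous (fun x => (f x)^-1).
Proof. by move=> f_neq0 cf x; apply: cvgV => //; apply: cf. Qed.

End ContinuousFun.

Lemma fun_continuous_comp {T U W : topologicalType} {f : T -> U} {g : U -> W} :
  continuous f -> continuous g -> continuous (fun x => g (f x)).
Proof. by move=> cf cg x; apply: continuous_comp (cf x) (cg _). Qed.

Lemma fst_continuous {T U : topologicalType} : continuous (@fst T U).
Proof. by move=> [x y]; apply: cvg_fst. Qed.

Lemma snd_continuous {T U : topologicalType} : continuous (@snd T U).
Proof. by move=> [x y]; apply: cvg_snd. Qed.

Lemma pair_continuous {T U W : topologicalType} (f : T -> U) (g : T -> W) :
  continuous f -> continuous g -> continuous (fun x => (f x, g x)).
Proof. by move=> cf cg x; apply: cvg_pair; [apply: cf | apply: cg]. Qed.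

Section Plane.
Context {R : realType}.
Implicit Types (a l : R) (w A B : R * R).

Lemma lerp2_0 A B : lerp2 R A B 0 = A.
Proof. by case: A => u v; rewrite /lerp2 subr0 !mul1r !mul0r !addr0. Qed.

Lemma lerp2_1 A B : lerp2 R A B 1 = B.
Proof. by case: B => u v; rewrite /lerp2 subrr !mul1r !mul0r !add0r. Qed.

Definition halfturn w : R * R := (4 - w.1, - w.2).

Lemma lerp2_halfturn A B l :
  lerp2 R (halfturn B) (halfturn A) (1 - l) = halfturn (lerp2 R A B l).
Proof. by rewrite /lerp2 /halfturn /=; congr (_, _); ring. Qed.

Definition box2 (a1 b1 a2 b2 : R) : set (R * R) :=
  [set w | a1 <= w.1 <= b1 /\ a2 <= w.2 <= b2].

Lemma lerp2_box a1 b1 a2 b2 A B l : 0 <= l <= 1 ->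
  box2 a1 b1 a2 b2 A -> box2 a1 b1 a2 b2 B -> box2 a1 b1 a2 b2 (lerp2 R A B l).
Proof.
case: A B => [u1 u2] [v1 v2] /andP[l_ge0 l_le1].
move=> [/= /andP[u1_ge u1_le] /andP[u2_ge u2_le]].
move=> [/= /andP[v1_ge v1_le] /andP[v2_ge v2_le]].
by rewrite /lerp2; split; apply/andP; split => /=; nra.
Qed.

Definition rot2 a w : R * R :=
  (w.1 * cos a - w.2 * sin a, w.1 * sin a + w.2 * cos a).

Definition norm2 w : R := Num.sqrt (w.1 ^+ 2 + w.2 ^+ 2).

Lemma rot2_sqr a w :
  (rot2 a w).1 ^+ 2 + (rot2 a w).2 ^+ 2 = w.1 ^+ 2 + w.2 ^+ 2.
Proof.
have := cos2Dsin2 a; rewrite /rot2 /=; set c := cos a; set s := sin a => cs1.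
by rewrite -[RHS]mulr1 -cs1; ring.
Qed.

Lemma norm2_rot2 a w : norm2 (rot2 a w) = norm2 w.
Proof. by rewrite /norm2 rot2_sqr. Qed.

Lemma rot2_0 w : rot2 0 w = w.
Proof. by case: w => u v; rewrite /rot2 cos0 sin0 /=; congr (_, _); ring. Qed.

Lemma rot2_pi w : rot2 pi w = (- w.1, - w.2).
Proof. by rewrite /rot2 cospi sinpi; congr (_, _); ring. Qed.

Lemma rot2K a : cancel (rot2 a) (rot2 (- a)).
Proof.
case=> u v; have := cos2Dsin2 a; rewrite /rot2 cosN sinN /=.
set c := cos a; set s := sin a => cs1.
by congr (_, _); rewrite -[RHS]mulr1 -cs1; ring.
Qed.

End Plane.

Section Twist.
Context {R : realType}.
Implicit Types (p : R * R * R) (w : R * R) (r rho t : R).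

Definition unit_square : set (R * R) := box2 (-1) 1 (-1) 1.

Definition tube_bump (rho : R) : R := Num.min 1 (Num.max 0 (4 - 4 * rho)).

(* Clamped at 1 so that dividing by it is harmless near the axis; on the solid
   torus it is the distance to the axis. *)
Definition radius p : R := Num.max 1 (Num.sqrt (p.1.1 ^+ 2 + p.1.2 ^+ 2)).

Definition meridian p : R * R := (radius p - 2, p.2).

Definition with_meridian p w : R * R * R :=
  (p.1.1 * ((2 + w.1) / radius p), p.1.2 * ((2 + w.1) / radius p), w.2).

Definition twist_rot (t : R) p : R * R :=
  rot2 (pi * t * tube_bump (norm2 (meridian p))) (meridian p).

Definition twist (t : R) p : R * R * R := with_meridian p (twist_rot t p).

Lemma tube_bump_out rho : 1 <= rho -> tube_bump rho = 0.
Proof. by move=> rho_ge1; rewrite /tube_bump (@max_l _ _ 0) ?min_r //; lra. Qed.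

Lemma tube_bump_core rho : rho <= 3 / 4 -> tube_bump rho = 1.
Proof. by move=> rho_le; rewrite /tube_bump max_r ?min_l //; lra. Qed.

Lemma radius_ge1 p : 1 <= radius p.
Proof. by rewrite le_max lexx. Qed.

Lemma radius_neq0 p : radius p != 0.
Proof. by apply: lt0r_neq0; apply: lt_le_trans ltr01 (radius_ge1 p). Qed.

Lemma radius_eq p r :
  1 <= r -> p.1.1 ^+ 2 + p.1.2 ^+ 2 = r ^+ 2 -> radius p = r.
Proof.
by move=> r_ge1 pr; rewrite /radius pr sqrtr_sqr ger0_norm ?max_r //; lra.
Qed.

Lemma radius_sqr p :
  solid_torus R p -> radius p ^+ 2 = p.1.1 ^+ 2 + p.1.2 ^+ 2.
Proof.
case=> /andP[r_ge1 _] _.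
have sqrt_ge1 : 1 <= Num.sqrt (p.1.1 ^+ 2 + p.1.2 ^+ 2).
  by rewrite -sqrtr1 ler_sqrt //; lra.
by rewrite /radius max_r // sqr_sqrtr //; lra.
Qed.

Lemma meridian_square p : solid_torus R p -> unit_square (meridian p).
Proof.
move=> Vp; have r2 := radius_sqr _ Vp; have r1 := radius_ge1 p.
case: Vp => /andP[_ r_le9] z_le1; split => //=; apply/andP; split; nra.
Qed.

Lemma with_meridian_meridian p : with_meridian p (meridian p) = p.
Proof.
rewrite /with_meridian /= addrC subrK divff ?radius_neq0 //.
by case: p => [[x y] z] /=; rewrite !mulr1.
Qed.

Lemma with_meridian_sqr p w : solid_torus R p ->
  (with_meridian p w).1.1 ^+ 2 + (with_meridian p w).1.2 ^+ 2 = (2 + w.1) ^+ 2.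
Proof.
move=> Vp; have r2 := radius_sqr _ Vp; have r0 := radius_neq0 p.
by rewrite /with_meridian /= !exprMn -mulrDl -r2; field.
Qed.

Lemma radius_with_meridian p w : solid_torus R p -> unit_square w ->
  radius (with_meridian p w) = 2 + w.1.
Proof.
move=> Vp [/andP[w1_ge _] _]; apply: radius_eq; first lra.
exact: with_meridian_sqr.
Qed.

Lemma meridian_with_meridian p w : solid_torus R p -> unit_square w ->
  meridian (with_meridian p w) = w.
Proof.
move=> Vp sw; rewrite /meridian radius_with_meridian //.
by case: w sw => u v _ /=; congr (_, _); ring.
Qed.

Lemma with_meridian_comp p w w' : solid_torus R p -> unit_square w ->
  with_meridian (with_meridian p w) w' = with_meridian p w'.
Proof.
move=> Vp sw; have w1_ge : -1 <= w.1 by case: sw => /andP[].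
have r'_neq0 : 2 + w.1 != 0 by apply: lt0r_neq0; lra.
rewrite {1}/with_meridian radius_with_meridian //=.
move: (radius_neq0 p); case: p {Vp} => [[x y] z] /= r0.
by congr (_, _, _); rewrite /=; field; rewrite r0 r'_neq0.
Qed.

Lemma with_meridian_torus p w : solid_torus R p -> unit_square w ->
  solid_torus R (with_meridian p w).
Proof.
move=> Vp [/andP[w1_ge w1_le] w2]; split => //.
by rewrite with_meridian_sqr //; apply/andP; split; nra.
Qed.

Lemma twist_rot_square t p : solid_torus R p -> unit_square (twist_rot t p).
Proof.
move=> Vp; rewrite /twist_rot.
have [far|near] := leP 1 (norm2 (meridian p)).
  by rewrite tube_bump_out // mulr0 rot2_0; apply: meridian_square.
have : (meridian p).1 ^+ 2 + (meridian p).2 ^+ 2 < 1.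
  by move: near; rewrite /norm2 -[X in _ < X]sqrtr1 ltr_sqrt //; lra.
rewrite -(rot2_sqr (pi * t * tube_bump (norm2 (meridian p)))).
set w := rot2 _ _ => w_lt1; split; apply/andP; split; nra.
Qed.

Lemma twist_torus t p : solid_torus R p -> solid_torus R (twist t p).
Proof. by move=> Vp; apply: with_meridian_torus => //; apply: twist_rot_square. Qed.

Lemma twist0 p : twist 0 p = p.
Proof. by rewrite /twist /twist_rot mulr0 mul0r rot2_0 with_meridian_meridian. Qed.

Lemma twistK t p : solid_torus R p -> twist (- t) (twist t p) = p.
Proof.
move=> Vp; have sq := twist_rot_square t _ Vp.
rewrite {1}/twist with_meridian_comp // -[RHS]with_meridian_meridian.
congr (with_meridian p _).
rewrite {1}/twist_rot meridian_with_meridian // /twist_rot norm2_rot2.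
by rewrite mulrN mulNr rot2K.
Qed.

Lemma twist1_tube (x y z r : R) : 3 / 2 <= r <= 5 / 2 -> x ^+ 2 + y ^+ 2 = r ^+ 2 ->
  -(1 / 2) <= z <= 1 / 2 ->
  twist 1 (x, y, z) = (x * ((4 - r) / r), y * ((4 - r) / r), - z).
Proof.
move=> /andP[r_ge r_le] xy /andP[z_ge z_le].
have rad : radius (x, y, z) = r by apply: radius_eq => //; lra.
have core : norm2 (meridian (x, y, z)) <= 3 / 4.
  rewrite /norm2 /meridian rad /= -(@ger0_norm _ (3 / 4)) // -sqrtr_sqr.
  by rewrite ler_sqrt; nra.
rewrite /twist /twist_rot tube_bump_core // !mulr1 rot2_pi /with_meridian /= rad.
by congr (_ * (_ / _), _ * (_ / _), _); ring.
Qed.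

End Twist.

Section TwistContinuous.
Context {R : realType} {T : topologicalType}.
Variables (tf : T -> R) (f : T -> R * R * R).
Hypotheses (tf_cont : continuous tf) (f_cont : continuous f).

Let cst_cont (c : R) : continuous (fun _ : T => c).
Proof. by move=> x; apply: cvg_cst. Qed.

Let sqr_cont (g : T -> R) : continuous g -> continuous (fun x => g x ^+ 2).
Proof. by move=> cg; apply: fun_continuousM. Qed.

Let norm2_cont (g h : T -> R) : continuous g -> continuous h ->
  continuous (fun x => norm2 (g x, h x)).
Proof.
move=> cg ch; rewrite /norm2 /=.
apply: fun_continuous_comp; last exact: sqrt_continuous.
by apply: fun_continuousD; apply: sqr_cont.
Qed.

Lemma twist_continuous : continuous (fun x => twist (tf x) (f x)).
Proof.
have cx : continuous (fun x => (f x).1.1).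
  exact: fun_continuous_comp (fun_continuous_comp f_cont fst_continuous) fst_continuous.
have cy : continuous (fun x => (f x).1.2).
  exact: fun_continuous_comp (fun_continuous_comp f_cont fst_continuous) snd_continuous.
have cz : continuous (fun x => (f x).2).
  exact: fun_continuous_comp f_cont snd_continuous.
have crad : continuous (fun x => radius (f x)).
  by apply: max_fun_continuous; [apply: cst_cont | apply: norm2_cont].
have cmer1 : continuous (fun x => radius (f x) - 2).
  by apply: fun_continuousD => //; apply: cst_cont.
have cang : continuous (fun x => pi * tf x * tube_bump (norm2 (meridian (f x)))).
  apply: fun_continuousM; first by apply: fun_continuousM => //; apply: cst_cont.
  apply: min_fun_continuous; first exact: cst_cont.
  apply: max_fun_continuous; first exact: cst_cont.
  apply: fun_continuousD; first exact: cst_cont.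
  apply: fun_continuousN; apply: fun_continuousM; first exact: cst_cont.
  exact: norm2_cont.
have ccos := fun_continuous_comp cang (@continuous_cos R).
have csin := fun_continuous_comp cang (@continuous_sin R).
have crot1 : continuous (fun x => (twist_rot (tf x) (f x)).1).
  apply: fun_continuousD; first exact: fun_continuousM.
  by apply: fun_continuousN; apply: fun_continuousM.
have crot2 : continuous (fun x => (twist_rot (tf x) (f x)).2).
  by apply: fun_continuousD; apply: fun_continuousM.
have cscale : continuous
    (fun x => (2 + (twist_rot (tf x) (f x)).1) / radius (f x)).
  apply: fun_continuousM; first by apply: fun_continuousD => //; apply: cst_cont.
  by apply: fun_continuousV => // x; apply: radius_neq0.
by apply: pair_continuous => //; apply: pair_continuous; apply: fun_continuousM.
Qed.

End TwistContinuous.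

Lemma twist_isotopy (R : realType) : ambient_isotopy R (solid_torus R) twist.
Proof.
split.
- apply: continuous_subspaceT.
  exact: twist_continuous fst_continuous snd_continuous.
- by move=> p _; apply: twist0.
- move=> t _; split=> [p|]; first exact: twist_torus.
  exists (twist (- t)); split=> [p|p|p|].
  + exact: twist_torus.
  + exact: twistK.
  + by move=> Vp; rewrite -[X in twist X]opprK twistK.
  + apply: continuous_subspaceT.
    by apply: twist_continuous => // x; [apply: cvg_cst | apply: cvg_id].
Qed.

Section Pattern.
Context {R : realType}.

Definition core_box : set (R * R) := box2 (3 / 2) (5 / 2) (- (1 / 2)) (1 / 2).

Lemma twist1_halfplane (q : R * R) :
  core_box q -> twist 1 (q.1, 0, q.2) = ((halfturn q).1, 0, (halfturn q).2).
Proof.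
case=> q1_in q2_in; have q1_neq0 : q.1 != 0 by apply: lt0r_neq0; case/andP: q1_in; lra.
rewrite (twist1_tube _ _ _ _ q1_in _ q2_in); last by rewrite expr0n addr0.
by rewrite mul0r /halfturn /=; congr (_, _, _); field.
Qed.

Lemma cyl_addn (r th z : R) (k : nat) : cyl R r (th + k%:R) z = cyl R r th z.
Proof.
rewrite /cyl; have -> : 2 * pi * (th + k%:R) = 2 * pi * th + (pi *+ 2) *+ k.
  by rewrite mulrDr; congr (_ + _); rewrite -mulrnA -[RHS]mulr_natr natrM; ring.
by rewrite (periodicn (@cosD2pi R)) (periodicn (@sinD2pi R)).
Qed.

Lemma cyl_shift (r th z : R) (m n : nat) :
  cyl R r (th + (n%:R - m%:R)) z = cyl R r th z.
Proof.
by rewrite -(cyl_addn r _ z m) -[RHS](cyl_addn r th z n) addrA subrK.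
Qed.

Lemma twist1_cyl (r th : R) :
  3 / 2 <= r <= 5 / 2 -> twist 1 (cyl R r th 0) = cyl R (4 - r) th 0.
Proof.
move=> r_in; have r_neq0 : r != 0 by apply: lt0r_neq0; case/andP: r_in; lra.
have z_in : - (1 / 2) <= (0 : R) <= 1 / 2 by apply/andP; split; lra.
rewrite /cyl (twist1_tube _ _ _ _ r_in _ z_in); last first.
  by rewrite !exprMn -mulrDr cos2Dsin2 mulr1.
by congr (_, _, _); [field | field | rewrite oppr0].
Qed.

Definition clasp_vertex (L c : R) (k : nat) : R * R :=
  match k with
  | 0 => (5 / 2, 0)
  | 1 => (5 / 2 - 1 / (2 * L), - (1 / 2))
  | 2 => (c, - (1 / 2))
  | 3 => (c, 1 / 2)
  | 4 => (3 / 2 + 1 / (2 * L), 1 / 2)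
  | _ => (3 / 2, 0)
  end.

Definition clasp (L c s : R) : R * R :=
  let P := clasp_vertex L c in
  if s <= 1 then lerp2 R (P 0) (P 1) s
  else if s <= 2 then lerp2 R (P 1) (P 2) (s - 1)
  else if s <= 3 then lerp2 R (P 2) (P 3) (s - 2)
  else if s <= 4 then lerp2 R (P 3) (P 4) (s - 3)
  else lerp2 R (P 4) (P 5) (s - 4).

Lemma clasp_segment_index (s : R) : 0 <= s <= 5 ->
  exists2 k, (k <= 4)%N & k%:R <= s <= k%:R + 1.
Proof.
case/andP=> s_ge0 s_le5.
have [|] := leP s 1; first by exists 0%N => //; apply/andP; split; lra.
have [|] := leP s 2; first by exists 1%N => //; apply/andP; split; lra.
have [|] := leP s 3; first by exists 2%N => //; apply/andP; split; lra.
have [|] := leP s 4; first by exists 3%N => //; apply/andP; split; lra.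
by exists 4%N => //; apply/andP; split; lra.
Qed.

Lemma clasp_segment (L c : R) (k : nat) (s : R) : (k <= 4)%N -> k%:R <= s <= k%:R + 1 ->
  clasp L c s = lerp2 R (clasp_vertex L c k) (clasp_vertex L c k.+1) (s - k%:R).
Proof.
rewrite /clasp; case: k => [|[|[|[|[|k]]]]] //= _ /andP[s_ge s_le].
- by rewrite ifT ?subr0 //; lra.
- case: ifP => [hs|_]; last by rewrite ifT //; lra.
  have -> : s = 1 by lra.
  by rewrite subrr lerp2_1 lerp2_0.
- case: ifP => [hs|_]; first by exfalso; lra.
  case: ifP => [hs|_]; last by rewrite ifT //; lra.
  have -> : s - 1 = 1 by lra.
  have -> : s - 2 = 0 by lra.
  by rewrite lerp2_1 lerp2_0.
- case: ifP => [hs|_]; first by exfalso; lra.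
  case: ifP => [hs|_]; first by exfalso; lra.
  case: ifP => [hs|_]; last by rewrite ifT //; lra.
  have -> : s - 2 = 1 by lra.
  have -> : s - 3 = 0 by lra.
  by rewrite lerp2_1 lerp2_0.
- case: ifP => [hs|_]; first by exfalso; lra.
  case: ifP => [hs|_]; first by exfalso; lra.
  case: ifP => [hs|_]; first by exfalso; lra.
  case: ifP => [hs|_] //.
  have -> : s - 3 = 1 by lra.
  have -> : s - 4 = 0 by lra.
  by rewrite lerp2_1 lerp2_0.
Qed.

Lemma clasp_vertex_halfturn (L c : R) (j : nat) : (j <= 5)%N ->
  clasp_vertex L (4 - c) j = halfturn (clasp_vertex L c (5 - j)).
Proof.
by case: j => [|[|[|[|[|[|j]]]]]] //= _; rewrite /halfturn /=; congr (_, _); try ring; lra.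
Qed.

Lemma clasp_vertex_box (L c : R) (k : nat) :
  1 <= L -> 3 / 2 <= c <= 5 / 2 -> core_box (clasp_vertex L c k).
Proof.
move=> L_ge1 /andP[c_ge c_le].
have w_gt0 : 0 < 1 / (2 * L) by apply: divr_gt0 => //; lra.
have w_le : 1 / (2 * L) <= 1 / 2 by rewrite ler_pdivrMr; lra.
by case: k => [|[|[|[|[|k]]]]]; split; apply/andP; split => /=; lra.
Qed.

Lemma clasp_halfturn (L c s : R) : 0 <= s <= 5 ->
  clasp L (4 - c) (5 - s) = halfturn (clasp L c s).
Proof.
move=> s_in; have [k k_le /andP[s_ge s_le]] := clasp_segment_index _ s_in.
rewrite (clasp_segment L c _ s k_le); last exact/andP.
have k4_le : (4 - k <= 4)%N by rewrite leq_subr.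
have k4E : (4 - k)%:R = 4 - k%:R :> R by rewrite natrB.
rewrite (clasp_segment _ _ _ _ k4_le); last by rewrite k4E; apply/andP; split; lra.
rewrite (clasp_vertex_halfturn _ _ _ (leqW k4_le)) (clasp_vertex_halfturn _ _ (4 - k).+1 k4_le).
rewrite subSS subSn // subKn //.
by rewrite -lerp2_halfturn k4E; congr lerp2; ring.
Qed.

Lemma clasp_core_box (L c s : R) : 1 <= L -> 3 / 2 <= c <= 5 / 2 -> 0 <= s <= 5 ->
  core_box (clasp L c s).
Proof.
move=> L_ge1 c_in s_in; have [k k_le /andP[s_ge s_le]] := clasp_segment_index _ s_in.
rewrite (clasp_segment _ _ _ _ k_le); last exact/andP.
by apply: lerp2_box; [apply/andP; split; lra | exact: clasp_vertex_box ..].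
Qed.

Lemma twist1_clasp (L c s : R) : 1 <= L -> 3 / 2 <= c <= 5 / 2 -> 0 <= s <= 5 ->
  twist 1 ((clasp L c s).1, 0, (clasp L c s).2) =
  ((clasp L (4 - c) (5 - s)).1, 0, (clasp L (4 - c) (5 - s)).2).
Proof.
move=> L_ge1 c_in s_in; rewrite clasp_halfturn //.
by apply: twist1_halfplane; apply: clasp_core_box.
Qed.

Lemma mazur_pathE (m n : nat) (L t : R) : L = (m + n).+1%:R ->
  mazur_path R m n t =
  if t <= L then
    cyl R (3 / 2 + t / L) (if t <= m%:R + 1 / 2 then t else 2 * m%:R + 1 - t) 0
  else
    let q := clasp L (3 / 2 + (m%:R + 1 / 2) / L) (t - L) in (q.1, 0, q.2).
Proof. by move=> ->. Qed.

Lemma twist1_mazur_path (m n : nat) (L t : R) : L = (m + n).+1%:R ->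
  0 <= t < L + 5 ->
  twist 1 (mazur_path R m n t) =
  mazur_path R n m (if t <= L then L - t else 2 * L + 5 - t).
Proof.
move=> Lmn /andP[t_ge0 t_lt]; have Lnm : L = (n + m).+1%:R by rewrite addnC.
have L_sum : L = m%:R + n%:R + 1 by rewrite Lmn -addn1 !natrD.
have [m_ge0 n_ge0] : 0 <= m%:R :> R /\ 0 <= n%:R :> R by [].
have L_ge1 : 1 <= L by lra.
have L_neq0 : L != 0 by apply: lt0r_neq0; lra.
rewrite (mazur_pathE _ _ _ _ Lmn) (mazur_pathE _ _ _ _ Lnm).
have [t_le | t_gt] := leP t L.
  have -> : L - t <= L by lra.
  have t_div : 0 <= t / L <= 1.
    by apply/andP; split; [apply: divr_ge0; lra | rewrite ler_pdivrMr; lra].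
  rewrite twist1_cyl; last by apply/andP; split; lra.
  have -> : 4 - (3 / 2 + t / L) = 3 / 2 + (L - t) / L by field.
  set th := (if t <= m%:R + 1 / 2 then t else _).
  have -> : (if L - t <= n%:R + 1 / 2 then L - t else 2 * n%:R + 1 - (L - t))
      = th + (n%:R - m%:R).
    by rewrite /th; case: leP => ?; case: leP => ?; lra.
  by rewrite cyl_shift.
rewrite ifN; last by rewrite -ltNge; lra.
have -> : 2 * L + 5 - t - L = 5 - (t - L) by ring.
have -> : 3 / 2 + (n%:R + 1 / 2) / L = 4 - (3 / 2 + (m%:R + 1 / 2) / L).
  by rewrite L_sum; field; rewrite -L_sum.
have c_in : 0 <= (m%:R + 1 / 2) / L <= 1.
  by apply/andP; split; [apply: divr_ge0; lra | rewrite ler_pdivrMr; lra].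
by apply: twist1_clasp => //; apply/andP; split; lra.
Qed.

End Pattern.

Section Reparametrization.
Context {R : realType}.

Definition frac (s : R) : R := s - (Num.floor s)%:~R.

Lemma frac_itv s : 0 <= frac s < 1.
Proof.
have := floor_itv s; rewrite intrD => /andP[fl_le lt_fl1].
by rewrite /frac; apply/andP; split; lra.
Qed.

Lemma frac_sub (a s : R) : 0 <= a < 1 ->
  frac (a - s) = if frac s <= a then a - frac s else a - frac s + 1.
Proof.
move=> /andP[a_ge0 a_lt1]; have := frac_itv s; rewrite /frac.
set k := Num.floor s => /andP[f_ge0 f_lt1].
case: leP => f_le.
  rewrite (@floor_def _ _ (- k)) ?mulrNz; first ring.
  by rewrite intrD mulrNz; apply/andP; split; lra.
rewrite (@floor_def _ _ (- k - 1)) ?intrB ?mulrNz; first ring.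
by rewrite intrD intrB mulrNz subrK; apply/andP; split; lra.
Qed.

(* On the path parameter t = (m + n + 6) s this is t |-> L - t modulo
   L + 5 = m + n + 6, where L = m + n + 1. *)
Definition mazur_reparam (m n : nat) (s : R) : R :=
  (m + n).+1%:R / (m + n + 6)%:R - s.

Lemma mazur_reparam_lift (m n : nat) :
  orientation_reversing_lift R (mazur_reparam m n).
Proof.
split=> [|s s' lt_ss'|s]; rewrite /mazur_reparam; [|lra|ring].
apply: fun_continuousD => [x|]; first exact: cvg_cst.
by apply: fun_continuousN => x; apply: cvg_id.
Qed.

Lemma mazur_reparamK (m n : nat) : involutive (mazur_reparam m n).
Proof. by move=> s; rewrite /mazur_reparam; ring. Qed.

Lemma twist1_mazur_param (m n : nat) (s : R) :
  twist 1 (mazur_param R m n s) = mazur_param R n m (mazur_reparam m n s).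
Proof.
set L : R := (m + n).+1%:R.
have L_ge1 : 1 <= L by rewrite /L -addn1 natrD lerDr.
have Kmn : (m + n + 6)%:R = L + 5 :> R by rewrite /L -addn1 !natrD; lra.
have Knm : (n + m + 6)%:R = L + 5 :> R by rewrite [(n + m)%N]addnC.
have K_gt0 : 0 < L + 5 by lra.
change (twist 1 (mazur_path R m n (frac s * (m + n + 6)%:R)) =
  mazur_path R n m (frac (mazur_reparam m n s) * (n + m + 6)%:R)).
have /andP[f_ge0 f_lt1] := frac_itv s.
have a_in : 0 <= L / (L + 5) < 1.
  by apply/andP; split; [apply: divr_ge0; lra | rewrite ltr_pdivrMr; lra].
rewrite Kmn Knm /mazur_reparam Kmn frac_sub // ler_pdivlMr //.
rewrite (twist1_mazur_path _ _ L) //; last first.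
  by apply/andP; split; nra.
by congr (mazur_path R n m _); case: ifP => _; field; apply: lt0r_neq0.
Qed.

End Reparametrization.

Theorem proposition1p1 (R : realType) (m n : nat) :
  (0 < m)%N -> (0 < n)%N ->
  (exists H : R -> R * R * R -> R * R * R,
      ambient_isotopy R (solid_torus R) H /\
      H 1 @` mazur_knot R m n = mazur_knot R n m) /\
  (exists (H : R -> R * R * R -> R * R * R) (phi : R -> R),
      [/\ ambient_isotopy R (solid_torus R) H,
          orientation_reversing_lift R phi &
          forall s, H 1 (mazur_param R m n s) = mazur_param R n m (phi s)]).
Proof.
move=> _ _; split; last first.
  exists twist, (mazur_reparam m n); split; first exact: twist_isotopy.
    exact: mazur_reparam_lift.
  exact: twist1_mazur_param.
exists twist; split; first exact: twist_isotopy.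
apply/seteqP; split=> [_ [_ [s _ <-] <-]|_ [u _ <-]].
  by rewrite twist1_mazur_param; exists (mazur_reparam m n s).
rewrite -(mazur_reparamK m n u) -twist1_mazur_param.
by exists (mazur_param R m n (mazur_reparam m n u)) => //; exists (mazur_reparam m n u).
Qed.
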